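(* Let $G$ be a $\lambda$-graph and $Q$ a query over $G$. If there exists a sharing equivalence on $G$ containing $Q$, then the spreading $Q^{\#}$ is the smallest sharing equivalence on $G$ containing $Q$.
   Context: A pre-$\lambda$-graph is a directed graph whose nodes are of four kinds: an application node $@(n_1,n_2)$ has exactly two children, its left child $n_1$ and its right child $n_2$; an abstraction node $\lambda(n)$ has exactly one child, its body $n$; a free variable node has no children and carries an atom $\mathrm{id}(n)$ from a fixed set of atoms, distinct free variable nodes carrying distinct atoms; a bound variable node $\mathrm{var}(l)$ has exactly one outgoing binding edge, to an abstraction node $l$ (its binder). Letters $l,l'$ denote abstraction nodes. A trace is a finite sequence of directions from $\{\swarrow,\downarrow,\searrow\}$; $\epsilon$ is the empty trace and $d\cdot\tau$ is the trace $\tau$ extended by one final step $d$. Paths $n\xrightarrow{\tau}m$ are defined inductively: $n\xrightarrow{\epsilon}n$; if $n\xrightarrow{\tau}\lambda(m)$ then $n\xrightarrow{\downarrow\cdot\tau}m$; if $n\xrightarrow{\tau}@(m_1,m_2)$ then $n\xrightarrow{\swarrow\cdot\tau}m_1$ and $n\xrightarrow{\searrow\cdot\tau}m_2$ (binding edges are never followed). We write $n\xrightarrow{\tau}$ if $n\xrightarrow{\tau}m$ for some $m$. The path $n\xrightarrow{\tau}$ crosses a node $m$ if either $n\xrightarrow{\tau}m$, or $\tau=d\cdot\tau'$ and $n\xrightarrow{\tau'}$ crosses $m$. A root is a node $r$ such that the only path ending in $r$ has the empty trace. A node $m$ dominates $n$ if every path from a root to $n$ crosses $m$. A $\lambda$-graph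 is a pre-$\lambda$-graph that has finitely many nodes, is acyclic ($n\xrightarrow{\tau}n$ holds only for $\tau=\epsilon$), and is dominated (every bound variable node $\mathrm{var}(l)$ is dominated by its binder $l$). Two nodes are homogeneous if both are application nodes, or both abstraction nodes, or both free variable nodes, or both bound variable nodes; a binary relation $R$ on nodes is homogeneous if it only relates homogeneous nodes. Rules: $(\swarrow)$: $@(n_1,n_2)\,R\,@(m_1,m_2)$ implies $n_1\,R\,m_1$; $(\searrow)$: $@(n_1,n_2)\,R\,@(m_1,m_2)$ implies $n_2\,R\,m_2$; $(\downarrow)$: $\lambda(n)\,R\,\lambda(m)$ implies $n\,R\,m$; $(\circlearrowright)$: $\mathrm{var}(n)\,R\,\mathrm{var}(m)$ implies $n\,R\,m$. $R$ is propagated if closed under $(\swarrow),(\downarrow),(\searrow)$. $R$ is open if $n\,R\,m$ implies $n=m$ for all free variable nodes $n,m$. A blind bisimulation is a homogeneous propagated relation; a bisimulation is a blind bisimulation closed also under $(\circlearrowright)$. A blind sharing equivalence is a blind bisimulation that is an equivalence relation; a sharing equivalence is an open bisimulation that is an equivalence relation. $R^*$ denotes the reflexive–symmetric–transitive closure of $R$; $R^{\Downarrow}$ (propagation) is the smallest propagated relation containing $R$; $R^{\#}$ (spreading) is the smallest propagated equivalence relation containing $R$. A query over $G$ is a binary relation on the roots of $G$. *)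

From mathcomp Require Import all_boot.
Set Implicit Arguments.
Unset Strict Implicit.
Unset Printing Implicit Defensive.

Inductive label (V A : Type) : Type :=
| App  of V & V
| Abs  of V
| FVar of A
| BVar of V.        (* var(l), binding edge to l *)
Arguments App {V A}. Arguments Abs {V A}. Arguments FVar {V A}. Arguments BVar {V A}.

Section LambdaGraphs.
Variables (V : finType) (A : Type) (G : V -> label V A).

Definition is_abs (n : V) : Prop := exists b, G n = Abs b.

Definition pre_lambda_graph : Prop :=
  (forall n l, G n = BVar l -> is_abs l) /\
  (forall n m a, G n = FVar a -> G m = FVar a -> n = m).

Inductive dir := DSW | DDown | DSE.

(* traces: the head of the list is the LAST step, i.e. d :: tau is d . tau *)
Definition trace := seq dir.

Inductive path (n : V) : trace -> V -> Prop :=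
| path_nil : path n [::] n
| path_down tau m b : path n tau m -> G m = Abs b -> path n (DDown :: tau) b
| path_sw tau m m1 m2 : path n tau m -> G m = App m1 m2 -> path n (DSW :: tau) m1
| path_se tau m m1 m2 : path n tau m -> G m = App m1 m2 -> path n (DSE :: tau) m2.

Fixpoint crosses (n : V) (tau : trace) (m : V) : Prop :=
  path n tau m \/ (match tau with [::] => False | _ :: tau' => crosses n tau' m end).

Definition is_root (r : V) : Prop := forall n tau, path n tau r -> tau = [::].

Definition dominates (m n : V) : Prop :=
  forall r tau, is_root r -> path r tau n -> crosses r tau m.

Definition acyclic : Prop := forall n tau, path n tau n -> tau = [::].

Definition dominated : Prop := forall n l, G n = BVar l -> dominates l n.

(* V is a finType, so finiteness is built in *)
Definition lambda_graph : Prop := pre_lambda_graph /\ acyclic /\ dominated.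

Definition nrel := V -> V -> Prop.

Definition homogeneous_nodes (n m : V) : Prop :=
  match G n, G m with
  | App _ _, App _ _ | Abs _, Abs _ | FVar _, FVar _ | BVar _, BVar _ => True
  | _, _ => False
  end.

Definition homogeneous (R : nrel) : Prop := forall n m, R n m -> homogeneous_nodes n m.

Definition propagated (R : nrel) : Prop :=
  (forall n m n1 n2 m1 m2, R n m -> G n = App n1 n2 -> G m = App m1 m2 -> R n1 m1) /\
  (forall n m b c, R n m -> G n = Abs b -> G m = Abs c -> R b c) /\
  (forall n m n1 n2 m1 m2, R n m -> G n = App n1 n2 -> G m = App m1 m2 -> R n2 m2).

Definition closed_var (R : nrel) : Prop :=
  forall n m l l', R n m -> G n = BVar l -> G m = BVar l' -> R l l'.

Definition open_rel (R : nrel) : Prop :=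
  forall n m a b, R n m -> G n = FVar a -> G m = FVar b -> n = m.

Definition equivalence (R : nrel) : Prop :=
  (forall n, R n n) /\ (forall n m, R n m -> R m n) /\
  (forall n m p, R n m -> R m p -> R n p).

Definition blind_bisimulation (R : nrel) : Prop := homogeneous R /\ propagated R.
Definition bisimulation (R : nrel) : Prop := blind_bisimulation R /\ closed_var R.
Definition sharing_equivalence (R : nrel) : Prop :=
  open_rel R /\ bisimulation R /\ equivalence R.

Definition rel_incl (R S : nrel) : Prop := forall n m, R n m -> S n m.

Definition spreading (R : nrel) : nrel :=
  fun n m => forall S : nrel, propagated S -> equivalence S -> rel_incl R S -> S n m.

Definition query (Q : nrel) : Prop := forall n m, Q n m -> is_root n /\ is_root m.

End LambdaGraphs.

From Pilot Require Import Defs.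
From mathcomp Require Import all_boot.
Set Implicit Arguments.
Unset Strict Implicit.

(* The spreading Q# is by construction a propagated equivalence
   containing Q, and it is contained in every propagated equivalence containing
   Q; in particular Q# is below the given sharing equivalence S0, hence it is
   homogeneous and open.  The only real work is closure under the binding rule.
   For this we show that Q# is also below the relation "S0 n m, and whenever
   equal traces lead from n and m to bound variables var(l), var(l'), then
   Q# l l'" (binder agreement).  That relation is a propagated equivalence; it
   contains Q because, for roots r Q r', dominance places l and l' on the two
   paths, and acyclicity together with S0 forces them to sit at the same trace
   b from r and r', so Q# l l' follows by propagating Q# r r' along b. *)

Section Spreading.
Variables (V : finType) (A : Type) (G : V -> label V A).

Lemma spreading_incl (R : nrel V) : rel_incl R (spreading G R).
Proof. by move=> n m Rnm S _ _ RS; apply: RS. Qed.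

Lemma spreading_least (R S : nrel V) :
  propagated G S -> equivalence S -> rel_incl R S -> rel_incl (spreading G R) S.
Proof. by move=> Sp Se RS n m; apply. Qed.

Lemma spreading_equivalence (R : nrel V) : equivalence (spreading G R).
Proof.
split; [|split].
- by move=> n S _ [Sr _] _.
- by move=> n m H S Sp Se RS; apply: Se.2.1; apply: H.
- by move=> n m p H1 H2 S Sp Se RS; apply: Se.2.2 (H1 S Sp Se RS) (H2 S Sp Se RS).
Qed.

Lemma spreading_propagated (R : nrel V) : propagated G (spreading G R).
Proof.
split; [|split].
- by move=> n m n1 n2 m1 m2 H Gn Gm S Sp Se RS; apply: Sp.1 (H S Sp Se RS) Gn Gm.
- by move=> n m b c H Gn Gm S Sp Se RS; apply: Sp.2.1 (H S Sp Se RS) Gn Gm.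
- by move=> n m n1 n2 m1 m2 H Gn Gm S Sp Se RS; apply: Sp.2.2 (H S Sp Se RS) Gn Gm.
Qed.

End Spreading.

Section Paths.
Variables (V : finType) (A : Type) (G : V -> label V A).
Local Notation gpath := (Defs.path G).

(* Traces list the last step first, so following t1 then t2 has trace t2 ++ t1. *)
Lemma path_cat a t1 b t2 c : gpath a t1 b -> gpath b t2 c -> gpath a (t2 ++ t1) c.
Proof.
move=> P1; elim=> [|t m b' _ IH Gm|t m m1 m2 _ IH Gm|t m m1 m2 _ IH Gm] //=.
- exact: path_down IH Gm.
- exact: path_sw IH Gm.
- exact: path_se IH Gm.
Qed.

Lemma path_split a t1 t2 c :
  gpath a (t2 ++ t1) c -> exists b, gpath a t1 b /\ gpath b t2 c.
Proof.
elim: t2 c => [|d t2 IH] c /= P; first by exists c; split=> //; constructor.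
inversion P as [|t0 m0 b0 Pm Gm|t0 m0 u0 v0 Pm Gm|t0 m0 u0 v0 Pm Gm]; subst;
  have [b [Pab Pbm]] := IH _ Pm; exists b; split=> //.
- exact: path_down Pbm Gm.
- exact: path_sw Pbm Gm.
- exact: path_se Pbm Gm.
Qed.

Lemma path_functional a t x y : gpath a t x -> gpath a t y -> x = y.
Proof.
move=> P; elim: P y => [|t0 m b _ IH Gm|t0 m m1 m2 _ IH Gm|t0 m m1 m2 _ IH Gm] y Py;
  inversion Py as [|t1 m0 b0 Pm Gm'|t1 m0 u0 v0 Pm Gm'|t1 m0 u0 v0 Pm Gm'];
  subst=> //; have E := IH _ Pm; subst; congruence.
Qed.

Lemma path_transfer (R : nrel V) a b t x y :
  propagated G R -> R a b -> gpath a t x -> gpath b t y -> R x y.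
Proof.
move=> [P1 [P2 P3]] Rab P; elim: P y
  => [|t0 m c _ IH Gm|t0 m m1 m2 _ IH Gm|t0 m m1 m2 _ IH Gm] y Py;
  inversion Py as [|t1 m0 b0 Pm Gm'|t1 m0 u0 v0 Pm Gm'|t1 m0 u0 v0 Pm Gm'];
  subst=> //.
- exact: P2 (IH _ Pm) Gm Gm'.
- exact: P1 (IH _ Pm) Gm Gm'.
- exact: P3 (IH _ Pm) Gm Gm'.
Qed.

Lemma path_simulation (R : nrel V) a b t x :
  blind_bisimulation G R -> R a b -> gpath a t x -> exists y, gpath b t y /\ R x y.
Proof.
move=> [Hh [P1 [P2 P3]]] Rab; elim
  => [|t0 m c _ [y [Py Ry]] Gm|t0 m m1 m2 _ [y [Py Ry]] Gm|t0 m m1 m2 _ [y [Py Ry]] Gm].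
- by exists b; split=> //; constructor.
all: have := Hh _ _ Ry; rewrite /homogeneous_nodes Gm.
all: case Gy: (G y) => [u v|c'|f|l] // _.
- by exists c'; split; [exact: path_down Py Gy | exact: P2 Ry Gm Gy].
- by exists u; split; [exact: path_sw Py Gy | exact: P1 Ry Gm Gy].
- by exists v; split; [exact: path_se Py Gy | exact: P3 Ry Gm Gy].
Qed.

Lemma crosses_path n s m : crosses G n s m -> exists a b, s = a ++ b /\ gpath n b m.
Proof.
elim: s => [|d s IH] /= [P|C] //; first by exists [::], [::].
  by exists [::], (d :: s).
by have [a [b [-> P]]] := IH C; exists (d :: a), b.
Qed.

Lemma path_distinct_nodes n t m : acyclic G -> gpath n t m ->
  exists s : seq V, [/\ uniq s, size s = (size t).+1 & {in s, forall x, exists t1, gpath x t1 m}].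
Proof.
move=> acyclic_G; elim: t m => [|d t IH] m P.
  inversion P; subst; exists [:: m]; split=> // x; rewrite inE => /eqP ->.
  by exists [::]; constructor.
have [k [Pnk Pkm]] := path_split (t1 := t) (t2 := [:: d]) P.
have [s [Us Ss Hs]] := IH _ Pnk.
have reach x : x \in s -> exists t1, gpath x t1 m.
  by move=> /Hs [t1 Pxk]; exists (d :: t1); exact: path_cat Pxk Pkm.
exists (m :: s); split=> /=; last 2 first.
- by rewrite Ss.
- move=> x; rewrite inE => /orP [/eqP ->|/reach //].
  by exists [::]; constructor.
rewrite Us andbT; apply/negP => /Hs [t1 Pmk].
by have := acyclic_G _ _ (path_cat Pmk Pkm).
Qed.

Lemma acyclic_path_size n t m : acyclic G -> gpath n t m -> size t < #|V|.
Proof.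
move=> acyclic_G P; have [s [Us Ss _]] := path_distinct_nodes acyclic_G P.
rewrite -ltnS -Ss; apply: leq_trans (max_card (mem s)).
by move/card_uniqP: Us => ->.
Qed.

(* A bisimulation equivalence never relates a node to a proper descendant:
   otherwise iterating the simulation would yield arbitrarily long paths. *)
Lemma related_not_descendant (R : nrel V) p q g :
  acyclic G -> blind_bisimulation G R -> equivalence R -> R p q -> gpath p g q -> g = [::].
Proof.
move=> acyclic_G Rb [Rr [_ Rt]] Rpq Pq.
have long k : exists z t, [/\ gpath p t z, size t = k * size g & R p z].
  elim: k => [|k [z [t [Pz St Rz]]]].
    by exists p, [::]; split; [exact: path_nil | | exact: Rr].
  have [w [Pw Rqw]] := path_simulation Rb Rz Pq.
  exists w, (g ++ t); split; first exact: path_cat Pz Pw.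
    by rewrite size_cat St mulSn.
  exact: Rt Rpq Rqw.
have [z [t [Pz St _]]] := long #|V|.
apply/size0nil/eqP; rewrite -leqn0 leqNgt; apply/negP => g_gt0.
have := acyclic_path_size acyclic_G Pz; rewrite St ltnNge.
by rewrite leq_pmulr.
Qed.

End Paths.

Lemma suffixes_comparable (T : Type) (a b a' b' : seq T) :
  a ++ b = a' ++ b' -> (exists g, b' = g ++ b) \/ (exists g, b = g ++ b').
Proof.
elim: a a' => [|x a IH] [|x' a'] /= E.
- by left; exists [::].
- by right; exists (x' :: a').
- by left; exists (x :: a); rewrite -E.
- by case: E => _ /IH.
Qed.

Section BinderAgreement.
Variables (V : finType) (A : Type) (G : V -> label V A).
Local Notation gpath := (Defs.path G).

Definition binder_agreement (R : nrel V) : nrel V :=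
  fun n m => forall s x y l l', gpath n s x -> gpath m s y ->
    G x = BVar l -> G y = BVar l' -> R l l'.

Lemma binder_agreement_step (R : nrel V) d n m n1 m1 :
  gpath n [:: d] n1 -> gpath m [:: d] m1 ->
  binder_agreement R n m -> binder_agreement R n1 m1.
Proof.
move=> Pn Pm H s x y l l' Px Py; apply: H.
- exact: path_cat Pn Px.
- exact: path_cat Pm Py.
Qed.

(* Intersected with a homogeneous propagated equivalence T (which is needed to
   find a bound variable in the middle for transitivity), binder agreement up
   to an equivalence R is a propagated equivalence. *)
Lemma binder_agreement_propagated_equivalence (T R : nrel V) :
  blind_bisimulation G T -> equivalence T -> equivalence R ->
  let U := fun n m => T n m /\ binder_agreement R n m in
  propagated G U /\ equivalence U.
Proof.
move=> Tb [Tr [Ts Tt]] [Rr [Rs Rt]] U; split.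
  have [_ [P1 [P2 P3]]] := Tb; split; [|split].
  - move=> n m n1 n2 m1 m2 [Tnm Hnm] Gn Gm; split; first exact: P1 Tnm Gn Gm.
    exact: binder_agreement_step (path_sw (path_nil G n) Gn) (path_sw (path_nil G m) Gm) Hnm.
  - move=> n m b c [Tnm Hnm] Gn Gm; split; first exact: P2 Tnm Gn Gm.
    exact: binder_agreement_step (path_down (path_nil G n) Gn) (path_down (path_nil G m) Gm) Hnm.
  - move=> n m n1 n2 m1 m2 [Tnm Hnm] Gn Gm; split; first exact: P3 Tnm Gn Gm.
    exact: binder_agreement_step (path_se (path_nil G n) Gn) (path_se (path_nil G m) Gm) Hnm.
split; [|split].
- move=> n; split=> // s x y l l' Px Py Gx Gy.
  by move: Gy; rewrite -(path_functional Px Py) Gx => -[<-].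
- move=> n m [Tnm Hnm]; split; first exact: Ts.
  by move=> s x y l l' Px Py Gx Gy; apply: Rs; exact: Hnm Py Px Gy Gx.
- move=> n m p [Tnm Hnm] [Tmp Hmp]; split; first exact: Tt Tnm Tmp.
  move=> s x z l l' Px Pz Gx Gz.
  have [y [Py Txy]] := path_simulation Tb Tnm Px.
  have := Tb.1 _ _ Txy; rewrite /homogeneous_nodes Gx.
  case Gy: (G y) => [u v|c|f|l''] // _.
  exact: Rt (Hnm _ _ _ _ _ Px Py Gx Gy) (Hmp _ _ _ _ _ Py Pz Gy Gz).
Qed.

End BinderAgreement.

(* Dominance puts the
   binders on the paths; if their traces differed, S would relate a node to a
   proper descendant, contradicting acyclicity. *)
Lemma root_binders_same_trace (V : finType) (A : Type) (G : V -> label V A)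
    (S : nrel V) r r' s x y l l' :
  lambda_graph G -> sharing_equivalence G S -> is_root G r -> is_root G r' -> S r r' ->
  Defs.path G r s x -> Defs.path G r' s y -> G x = BVar l -> G y = BVar l' ->
  exists b, Defs.path G r b l /\ Defs.path G r' b l'.
Proof.
move=> [_ [Hac Hdom]] [_ [[Sb Scv] Se]] Rr Rr' Srr' Px Py Gx Gy.
have [_ [Ss St]] := Se.
have [a [b [Es Pb]]] := crosses_path (Hdom _ _ Gx r s Rr Px).
have [a' [b' [Es' Pb']]] := crosses_path (Hdom _ _ Gy r' s Rr' Py).
have Sll' : S l l' := Scv _ _ _ _ (path_transfer Sb.2 Srr' Px Py) Gx Gy.
have no_extension u u' k k' c g : S u u' -> S k k' ->
    Defs.path G u c k -> Defs.path G u' (g ++ c) k' -> g = [::].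
  move=> Suu' Skk' Pk /path_split [p [Pp Pk']].
  have Spk' : S p k' := St _ _ _ (Ss _ _ (path_transfer Sb.2 Suu' Pk Pp)) Skk'.
  exact: related_not_descendant Hac Sb Se Spk' Pk'.
exists b; split=> //.
have [[g Eg]|[g Eg]] := suffixes_comparable (etrans (esym Es) Es').
- have g0 : g = [::] by apply: (no_extension _ _ _ _ _ _ Srr' Sll' Pb); rewrite -Eg.
  by move: Pb'; rewrite Eg g0.
- have g0 : g = [::].
    by apply: (no_extension _ _ _ _ _ _ (Ss _ _ Srr') (Ss _ _ Sll') Pb'); rewrite -Eg.
  by rewrite Eg g0.
Qed.

Theorem mainTheorem2 (V : finType) (A : Type) (G : V -> label V A) (Q : nrel V) :
  lambda_graph G -> query G Q ->
  (exists S : nrel V, sharing_equivalence G S /\ rel_incl Q S) ->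
  sharing_equivalence G (spreading G Q) /\ rel_incl Q (spreading G Q) /\
  (forall S : nrel V, sharing_equivalence G S -> rel_incl Q S -> rel_incl (spreading G Q) S).
Proof.
move=> HG HQ [S0 [HS0 QS0]].
have least S : sharing_equivalence G S -> rel_incl Q S -> rel_incl (spreading G Q) S.
  by move=> [_ [[[_ Sp] _] Se]]; exact: spreading_least.
have below_S0 := least S0 HS0 QS0.
have [S0open [[S0b _] S0e]] := HS0.
have [Up Ue] := binder_agreement_propagated_equivalence S0b S0e (spreading_equivalence G Q).
have agree : rel_incl (spreading G Q) (fun n m => S0 n m /\ binder_agreement G (spreading G Q) n m).
  apply: spreading_least Up Ue _ => r r' Qrr'; split; first exact: QS0.
  move=> s x y l l' Px Py Gx Gy; have [Rr Rr'] := HQ _ _ Qrr'.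
  have [b [Pl Pl']] := root_binders_same_trace HG HS0 Rr Rr' (QS0 _ _ Qrr') Px Py Gx Gy.
  exact: path_transfer (spreading_propagated G Q) (spreading_incl Qrr') Pl Pl'.
split; last by split; [exact: spreading_incl | exact: least].
split; first by move=> n m a b /below_S0; exact: S0open.
split; last exact: spreading_equivalence.
split; first by split; [move=> n m /below_S0; exact: S0b.1 | exact: spreading_propagated].
move=> n m l l' /agree [_ Hnm] Gn Gm.
exact: Hnm (path_nil G n) (path_nil G m) Gn Gm.
Qed.
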